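(* Let $\Phi$ be a $\mathsf{BST}^{\otimes}$-conjunction and let $\Sigma$ be a partition satisfying $\Phi$ via a partition assignment $\mathfrak I:\mathrm{Vars}(\Phi)\to\mathcal P(\Sigma)$. Let $\mathcal G_\Sigma=(\mathcal P_\Sigma,\mathcal N_\Sigma,\mathcal T_\Sigma)$ be the $\otimes$-graph induced by $\Sigma$ via a bijection $q\mapsto q^{(\bullet)}$ from $\mathcal P_\Sigma$ onto $\Sigma$. Then the map $\mathfrak F_\Sigma(x)=\{q\in\mathcal P_\Sigma : q^{(\bullet)}\in\mathfrak I(x)\}$ ($x\in\mathrm{Vars}(\Phi)$) is a $\mathcal G_\Sigma$-fulfilling map for $\Phi$; in particular $\mathcal G_\Sigma$ fulfills $\Phi$.
   Context: Sets range over the von Neumann universe of well-founded sets. For sets $s,t$, $s\otimes t=\{\{u,v\} : u\in s,\ v\in t\}$. A $\mathsf{BST}^{\otimes}$-conjunction is a finite conjunction of literals of the forms $x=y\cup z$, $x=y\setminus z$, $x=y\otimes z$, $x\neq y$. A partition is a set of pairwise disjoint nonempty sets (blocks). A partition assignment is a map $\mathfrak I:V\to\mathcal P(\Sigma)$ on a finite set $V$ of variables; it induces the set assignment $M_{\mathfrak I}v=\bigcup\mathfrak I(v)$, and $\Sigma$ satisfies $\Phi$ via $\mathfrak I$ if $M_{\mathfrak I}$ satisfies $\Phi$. For a set $S$, $\mathrm{Pow}^*_{1,2}(S)=\{t\subseteq\bigcup S : 1\le|t|\le2,\ t\cap s\neq\emptyset\text{ for all }s\in S\}$, and for a family $\mathcal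 B$, $\mathrm{Pow}^*_{1,2}[\mathcal B]=\{\mathrm{Pow}^*_{1,2}(B):B\in\mathcal B\}$. A subset $\Sigma^*\subseteq\Sigma$ is a $\otimes$-subpartition if $\bigcup\Sigma^*=\bigcup\mathrm{Pow}^*_{1,2}[\mathcal B]$ for some $\mathcal B\subseteq\Sigma\otimes\Sigma$; $\Sigma_\otimes$ is the largest $\otimes$-subpartition (its elements are $\otimes$-blocks) and $\Pi_\otimes\subseteq\Sigma\otimes\Sigma$ is the (unique) set with $\bigcup\Sigma_\otimes=\bigcup\mathrm{Pow}^*_{1,2}[\Pi_\otimes]$. A $\otimes$-graph $\mathcal G=(\mathcal P,\mathcal N,\mathcal T)$ consists of a set $\mathcal P$ of places, nodes $\mathcal N=\mathcal P\otimes\mathcal P$ (nonempty subsets of $\mathcal P$ with at most two elements), $\mathcal P\cap\mathcal N=\emptyset$, and a target map $\mathcal T:\mathcal N\to\mathcal P(\mathcal P)$. The $\otimes$-graph induced by $\Sigma$ via a bijection $q\mapsto q^{(\bullet)}$ from a set of places $\mathcal P_\Sigma$ (with $\mathcal P_\Sigma\cap(\mathcal P_\Sigma\otimes\mathcal P_\Sigma)=\emptyset$) onto $\Sigma$ has nodes $\mathcal N_\Sigma=\mathcal P_\Sigma\otimes\mathcal P_\Sigma$ and, writing $B^{(\bullet)}=\{q^{(\bullet)}:q\in B\}$, target map $\mathcal T_\Sigma(B)=\{q\in\mathcal P_\Sigma : q^{(\bullet)}\in\Sigma_\otimes,\ q^{(\bullet)}\cap\mathrm{Pow}^*_{1,2}(B^{(\bullet)})\neq\emptyset\}$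 if $B^{(\bullet)}\in\Pi_\otimes$, and $\mathcal T_\Sigma(B)=\emptyset$ otherwise. A map $\mathfrak F:\mathrm{Vars}(\Phi)\to\mathcal P(\mathcal P)$ is $\mathcal G$-fulfilling for $\Phi$ if: (a) $\mathfrak F(x)=\mathfrak F(y)\star\mathfrak F(z)$ for each conjunct $x=y\star z$, $\star\in\{\cup,\setminus\}$; (b) $\mathfrak F(x)\neq\mathfrak F(y)$ for each conjunct $x\neq y$; (c) for each conjunct $x=y\otimes z$: (c1) $\emptyset\neq\mathcal T(\{\upsilon,\zeta\})\subseteq\mathfrak F(x)$ for all $\upsilon\in\mathfrak F(y),\zeta\in\mathfrak F(z)$; (c2) $\mathfrak F(x)\subseteq\bigcup\{\mathcal T(A):A\in\mathfrak F(y)\otimes\mathfrak F(z)\}$; (c3) $\bigcup\{\mathcal T(A):A\in\mathcal N\setminus(\mathfrak F(y)\otimes\mathfrak F(z))\}\cap\mathfrak F(x)=\emptyset$. $\mathcal G$ fulfills $\Phi$ if such a map exists. *)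

(* The von Neumann universe of well-founded sets is modelled by
   Aczel's type-theoretic model of set theory: well-founded trees [V] with
   extensional equality [eqV] and membership [inV]. *)
From Stdlib Require Import List.
Import ListNotations.

Inductive V : Type := sup (A : Type) (f : A -> V).

Definition idx (s : V) : Type := match s with sup A _ => A end.
Definition elts (s : V) : idx s -> V :=
  match s return idx s -> V with sup _ f => f end.

Fixpoint eqV (x y : V) {struct x} : Prop :=
  match x, y with
  | sup A f, sup B g =>
      (forall a, exists b, eqV (f a) (g b)) /\ (forall b, exists a, eqV (f a) (g b))
  end.

Definition inV (x s : V) : Prop := exists a : idx s, eqV x (elts s a).
Definition subV (s t : V) : Prop := forall w, inV w s -> inV w t.

Definition unionV (s t : V) : V :=
  sup (idx s + idx t) (fun i => match i with inl a => elts s a | inr b => elts t b end).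
Definition sepV (s : V) (P : V -> Prop) : V :=
  sup {a : idx s | P (elts s a)} (fun a => elts s (proj1_sig a)).
Definition diffV (s t : V) : V := sepV s (fun w => ~ inV w t).
Definition pairV (u v : V) : V := sup bool (fun b => if b then u else v).
Definition otimesV (s t : V) : V :=
  sup (idx s * idx t) (fun p => pairV (elts s (fst p)) (elts t (snd p))).
Definition bigcupV (S : V) : V :=
  sup {a : idx S & idx (elts S a)} (fun p => elts (elts S (projT1 p)) (projT2 p)).
Definition imgV (h : V -> V) (s : V) : V := sup (idx s) (fun a => h (elts s a)).

Inductive literal : Type :=
| LUnion  (x y z : nat)
| LDiff   (x y z : nat)
| LOtimes (x y z : nat)
| LNeq    (x y : nat).

Definition conjunction := list literal.

Definition vars_lit (l : literal) : list nat :=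
  match l with
  | LUnion x y z | LDiff x y z | LOtimes x y z => [x; y; z]
  | LNeq x y => [x; y]
  end.
Definition Vars (Phi : conjunction) : list nat := flat_map vars_lit Phi.

Definition sat_lit (M : nat -> V) (l : literal) : Prop :=
  match l with
  | LUnion x y z => eqV (M x) (unionV (M y) (M z))
  | LDiff x y z => eqV (M x) (diffV (M y) (M z))
  | LOtimes x y z => eqV (M x) (otimesV (M y) (M z))
  | LNeq x y => ~ eqV (M x) (M y)
  end.
Definition satisfies (M : nat -> V) (Phi : conjunction) : Prop :=
  forall l, In l Phi -> sat_lit M l.

Definition is_partition (Sigma : V) : Prop :=
  (forall s, inV s Sigma -> exists w, inV w s) /\
  (forall s t, inV s Sigma -> inV t Sigma -> ~ eqV s t ->
     forall w, inV w s -> ~ inV w t).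

Definition is_partition_assignment (Phi : conjunction) (Sigma : V) (J : nat -> V) : Prop :=
  forall x, In x (Vars Phi) -> subV (J x) Sigma.

Definition M_of (J : nat -> V) : nat -> V := fun v => bigcupV (J v).

Definition partition_satisfies_via (Sigma : V) (Phi : conjunction) (J : nat -> V) : Prop :=
  is_partition_assignment Phi Sigma J /\ satisfies (M_of J) Phi.

Definition in_PowStar (S t : V) : Prop :=
  subV t (bigcupV S) /\
  (exists u v, eqV t (pairV u v)) /\   (* 1 <= |t| <= 2 *)
  (forall s, inV s S -> exists a, inV a t /\ inV a s).

Definition in_bigcup_PowStar (B t : V) : Prop :=
  exists b, inV b B /\ in_PowStar b t.

Definition is_otimes_subpartition (Sigma SigS : V) : Prop :=
  subV SigS Sigma /\
  exists B, subV B (otimesV Sigma Sigma) /\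
    forall t, inV t (bigcupV SigS) <-> in_bigcup_PowStar B t.

Definition is_Sigma_otimes (Sigma SigO : V) : Prop :=
  is_otimes_subpartition Sigma SigO /\
  forall SigS, is_otimes_subpartition Sigma SigS -> subV SigS SigO.

Definition is_Pi_otimes (Sigma SigO PiO : V) : Prop :=
  subV PiO (otimesV Sigma Sigma) /\
  forall t, inV t (bigcupV SigO) <-> in_bigcup_PowStar PiO t.

(* (x)-graphs: places Pl, nodes Pl (x) Pl, target map T *)
Definition places_nodes_disjoint (Pl : V) : Prop :=
  forall q, inV q Pl -> ~ inV q (otimesV Pl Pl).

Definition is_place_bijection (Pl Sigma : V) (beta : V -> V) : Prop :=
  (forall q q', inV q Pl -> inV q' Pl -> (eqV q q' <-> eqV (beta q) (beta q'))) /\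
  (forall q, inV q Pl -> inV (beta q) Sigma) /\
  (forall s, inV s Sigma -> exists q, inV q Pl /\ eqV (beta q) s).

Definition T_Sigma (Pl SigO PiO : V) (beta : V -> V) (B : V) : V :=
  sepV Pl (fun q =>
    inV (imgV beta B) PiO /\
    inV (beta q) SigO /\
    exists w, inV w (beta q) /\ in_PowStar (imgV beta B) w).

Definition fulfilling (Pl : V) (T : V -> V) (Phi : conjunction) (F : nat -> V) : Prop :=
  (forall x, In x (Vars Phi) -> subV (F x) Pl) /\
  forall l, In l Phi ->
    match l with
    | LUnion x y z => eqV (F x) (unionV (F y) (F z))
    | LDiff x y z => eqV (F x) (diffV (F y) (F z))
    | LNeq x y => ~ eqV (F x) (F y)
    | LOtimes x y z =>
        (forall u v, inV u (F y) -> inV v (F z) ->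
           (exists q, inV q (T (pairV u v))) /\ subV (T (pairV u v)) (F x)) /\
        (forall q, inV q (F x) ->
           exists A, inV A (otimesV (F y) (F z)) /\ inV q (T A)) /\
        (forall A q, inV A (otimesV Pl Pl) -> ~ inV A (otimesV (F y) (F z)) ->
           inV q (T A) -> ~ inV q (F x))
    end.

Definition fulfills (Pl : V) (T : V -> V) (Phi : conjunction) : Prop :=
  exists F, fulfilling Pl T Phi F.

(* The proof rests on two facts about a partition Sigma.  (1) A set J of
   blocks is determined by its union: a block lies in J exactly when one of
   its elements lies in \bigcup J.  Transported along the bijection beta
   between places and blocks, this makes F commute with union and difference
   and reflect equality, which settles the Boolean literals.  (2) A member w
   of Pow*_{1,2}(P), with P a set of blocks, determines P: P consists of the
   blocks that w meets.

   For a literal x = y (x) z, \bigcup J(x) is the union of the sets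
   Pow*_{1,2}({s,t}) with s in J(y), t in J(z).  Hence J(x) is a
   (x)-subpartition, so J(x) is contained in Sigma_(x), and by (2) every such
   pair {s,t} lies in Pi_(x).  Using (2) once more, a node {u,v} can only
   target places of F(x) when {beta u, beta v} is such a pair; this gives
   conditions (c1)-(c3). *)

From Stdlib Require Import List Classical Setoid Morphisms.

Lemma eqV_refl x : eqV x x.
Proof. induction x as [A f IH]; simpl; split; intros a; exists a; apply IH. Qed.

Lemma eqV_sym x y : eqV x y -> eqV y x.
Proof.
  revert y; induction x as [A f IH]; intros [B g] [Hfg Hgf]; simpl; split.
  - intros b. destruct (Hgf b) as [a Ha]. exists a. apply IH, Ha.
  - intros a. destruct (Hfg a) as [b Hb]. exists b. apply IH, Hb.
Qed.

Lemma eqV_trans x y z : eqV x y -> eqV y z -> eqV x z.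
Proof.
  revert y z; induction x as [A f IH]; intros [B g] [C h] [Hfg Hgf] [Hgh Hhg]; simpl; split.
  - intros a. destruct (Hfg a) as [b Hb]. destruct (Hgh b) as [c Hc]. exists c. eapply IH; eauto.
  - intros c. destruct (Hhg c) as [b Hb]. destruct (Hgf b) as [a Ha]. exists a. eapply IH; eauto.
Qed.

#[global] Instance eqV_Equivalence : Equivalence eqV.
Proof. split; red; [apply eqV_refl | apply eqV_sym | apply eqV_trans]. Qed.

Lemma inV_compat w w' s s' : eqV w w' -> eqV s s' -> inV w s -> inV w' s'.
Proof.
  destruct s as [A f], s' as [B g]. intros Ew [Hfg _] [a Ha]. simpl in Ha.
  destruct (Hfg a) as [b Hb]. exists b. simpl. rewrite <- Ew, Ha. exact Hb.
Qed.

#[global] Instance inV_Proper : Proper (eqV ==> eqV ==> iff) inV.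
Proof.
  intros w w' Ew s s' Es; split; apply inV_compat; (assumption || symmetry; assumption).
Qed.

Lemma eqV_ext s t : (forall w, inV w s <-> inV w t) -> eqV s t.
Proof.
  destruct s as [A f], t as [B g]; intros H; simpl; split.
  - intros a. destruct (proj1 (H (f a))) as [b Hb]; [exists a; reflexivity | exists b; exact Hb].
  - intros b. destruct (proj2 (H (g b))) as [a Ha]; [exists b; reflexivity | exists a; symmetry; exact Ha].
Qed.

Lemma eqV_ext_within X s t : subV s X -> subV t X ->
  (forall w, inV w X -> (inV w s <-> inV w t)) -> eqV s t.
Proof.
  intros HsX HtX H. apply eqV_ext. intros w; split; intros Hw.
  - apply H; [apply HsX |]; exact Hw.
  - apply H; [apply HtX |]; exact Hw.
Qed.

Lemma in_union w s t : inV w (unionV s t) <-> inV w s \/ inV w t.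
Proof.
  split.
  - intros [[a | b] H]; [left; exists a | right; exists b]; exact H.
  - intros [[a H] | [b H]]; [exists (inl a) | exists (inr b)]; exact H.
Qed.

Lemma in_sepV w s (P : V -> Prop) :
  (forall u u', inV u s -> eqV u u' -> P u -> P u') ->
  (inV w (sepV s P) <-> inV w s /\ P w).
Proof.
  intros HP; split.
  - intros [[a Pa] Ew]; simpl in Ew. split; [exists a; exact Ew |].
    apply (HP (elts s a)); [exists a; reflexivity | symmetry; exact Ew | exact Pa].
  - intros [[a Ew] Pw]. exists (exist _ a (HP w _ (ex_intro _ a Ew) Ew Pw)). exact Ew.
Qed.

Lemma in_diff w s t : inV w (diffV s t) <-> inV w s /\ ~ inV w t.
Proof. apply in_sepV. intros u u' _ E Hu. cbv beta in *. rewrite <- E. exact Hu. Qed.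

Lemma in_pair w u v : inV w (pairV u v) <-> eqV w u \/ eqV w v.
Proof.
  split.
  - intros [[|] H]; [left | right]; exact H.
  - intros [H | H]; [exists true | exists false]; exact H.
Qed.

Lemma pair_in_l u v : inV u (pairV u v).
Proof. apply in_pair; left; reflexivity. Qed.

Lemma pair_in_r u v : inV v (pairV u v).
Proof. apply in_pair; right; reflexivity. Qed.

Lemma in_bigcup w S : inV w (bigcupV S) <-> exists s, inV s S /\ inV w s.
Proof.
  split.
  - intros [[a b] H]. exists (elts S a). split; [exists a; reflexivity | exists b; exact H].
  - intros [s [[a Ha] Hw]]. rewrite Ha in Hw. destruct Hw as [b Hb].
    exists (existT _ a b). exact Hb.
Qed.

Lemma in_otimes w s t :
  inV w (otimesV s t) <-> exists u v, inV u s /\ inV v t /\ eqV w (pairV u v).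
Proof.
  split.
  - intros [[i j] H]. exists (elts s i), (elts t j).
    split; [exists i; reflexivity | split; [exists j; reflexivity | exact H]].
  - intros (u & v & [i Hi] & [j Hj] & H). exists (i, j). simpl.
    rewrite H. apply eqV_ext. intros x. rewrite !in_pair, Hi, Hj. reflexivity.
Qed.

Lemma in_img w h s : inV w (imgV h s) <-> exists a, eqV w (h (elts s a)).
Proof. split; intros [a H]; exists a; exact H. Qed.

#[global] Instance pairV_Proper : Proper (eqV ==> eqV ==> eqV) pairV.
Proof. intros u u' Eu v v' Ev. apply eqV_ext; intros w. rewrite !in_pair, Eu, Ev. reflexivity. Qed.

#[global] Instance bigcupV_Proper : Proper (eqV ==> eqV) bigcupV.
Proof. intros S S' E. apply eqV_ext; intros w. rewrite !in_bigcup. setoid_rewrite E. reflexivity. Qed.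

Lemma pair_sym u v : eqV (pairV u v) (pairV v u).
Proof. apply eqV_ext; intros w. rewrite !in_pair. tauto. Qed.

Lemma pair_ext x y s t : inV x (pairV s t) -> inV y (pairV s t) ->
  inV s (pairV x y) -> inV t (pairV x y) -> eqV (pairV x y) (pairV s t).
Proof.
  intros Hx Hy Hs Ht. apply eqV_ext; intros w; split; intros Hw;
    apply in_pair in Hw as [E | E]; rewrite E; assumption.
Qed.

Lemma pair_sub x y X : inV x X -> inV y X -> subV (pairV x y) X.
Proof. intros Hx Hy w Hw. apply in_pair in Hw as [E | E]; rewrite E; assumption. Qed.

Lemma otimes_self_sub A X : inV A (otimesV X X) -> subV A X.
Proof.
  intros HA w Hw. apply in_otimes in HA as (u & v & Hu & Hv & E).
  rewrite E in Hw. exact (pair_sub u v X Hu Hv w Hw).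
Qed.

#[global] Instance in_PowStar_Proper : Proper (eqV ==> eqV ==> iff) in_PowStar.
Proof.
  intros S S' ES t t' Et. unfold in_PowStar, subV. setoid_rewrite ES. setoid_rewrite Et. reflexivity.
Qed.

Lemma PowStar_pair_intro s t a b : inV a s -> inV b t -> in_PowStar (pairV s t) (pairV a b).
Proof.
  intros Ha Hb. split; [| split].
  - intros w Hw. apply in_bigcup. apply in_pair in Hw as [E | E].
    + exists s. rewrite E. split; [apply pair_in_l | exact Ha].
    + exists t. rewrite E. split; [apply pair_in_r | exact Hb].
  - exists a, b. reflexivity.
  - intros c Hc. apply in_pair in Hc as [E | E].
    + exists a. rewrite E. split; [apply pair_in_l | exact Ha].
    + exists b. rewrite E. split; [apply pair_in_r | exact Hb].
Qed.

Lemma PowStar_pair_elim s t w : in_PowStar (pairV s t) w ->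
  exists a b, inV a s /\ inV b t /\ eqV w (pairV a b).
Proof.
  intros (Hsub & (u & v & E) & Hmeet).
  assert (Hcover : forall e, inV e w -> inV e s \/ inV e t).
  { intros e He. apply Hsub, in_bigcup in He as (c & Hc & Hec).
    apply in_pair in Hc as [Ec | Ec]; rewrite Ec in Hec; auto. }
  assert (Huv : forall e, inV e w -> eqV e u \/ eqV e v)
    by (intros e He; rewrite E, in_pair in He; exact He).
  assert (Hu : inV u w) by (rewrite E; apply pair_in_l).
  assert (Hv : inV v w) by (rewrite E; apply pair_in_r).
  destruct (Hmeet s (pair_in_l s t)) as (e1 & He1 & He1s).
  destruct (Hmeet t (pair_in_r s t)) as (e2 & He2 & He2t).
  assert (Hs : inV u s \/ inV v s)
    by (destruct (Huv e1 He1) as [X | X]; rewrite X in He1s; auto).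
  assert (Ht : inV u t \/ inV v t)
    by (destruct (Huv e2 He2) as [X | X]; rewrite X in He2t; auto).
  assert (Horder : (inV u s /\ inV v t) \/ (inV v s /\ inV u t))
    by (pose proof (Hcover u Hu); pose proof (Hcover v Hv); tauto).
  destruct Horder as [[Hus Hvt] | [Hvs Hut]].
  - exists u, v. auto.
  - exists v, u. split; [exact Hvs | split; [exact Hut |]]. rewrite E. apply pair_sym.
Qed.

Section InducedGraph.

Variable Sigma : V.
Hypothesis blocks_nonempty : forall s, inV s Sigma -> exists w, inV w s.
Hypothesis blocks_disjoint : forall s t, inV s Sigma -> inV t Sigma -> ~ eqV s t ->
  forall w, inV w s -> ~ inV w t.

Lemma blocks_meeting_eq s t e : inV s Sigma -> inV t Sigma -> inV e s -> inV e t -> eqV s t.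
Proof. intros Hs Ht Hes Het. apply NNPP; intros N. exact (blocks_disjoint s t Hs Ht N e Hes Het). Qed.

Lemma block_in_bigcup J s e : subV J Sigma -> inV s Sigma -> inV e s ->
  (inV e (bigcupV J) <-> inV s J).
Proof.
  intros HJ Hs He. rewrite in_bigcup. split.
  - intros (t & Ht & Het). rewrite (blocks_meeting_eq s t e Hs (HJ t Ht) He Het). exact Ht.
  - intros HsJ. exists s. auto.
Qed.

Lemma PowStar_blocks P w s : subV P Sigma -> in_PowStar P w -> inV s Sigma ->
  (inV s P <-> exists a, inV a w /\ inV a s).
Proof.
  intros HP (Hsub & _ & Hmeet) Hs. split.
  - apply Hmeet.
  - intros (a & Haw & Has). apply Hsub, in_bigcup in Haw as (b & Hb & Hab).
    rewrite (blocks_meeting_eq s b a Hs (HP b Hb) Has Hab). exact Hb.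
Qed.

Lemma PowStar_determines P P' w : subV P Sigma -> subV P' Sigma ->
  in_PowStar P w -> in_PowStar P' w -> eqV P P'.
Proof.
  intros HP HP' Hw Hw'. apply (eqV_ext_within Sigma); [exact HP | exact HP' |].
  intros s Hs. rewrite (PowStar_blocks P w s), (PowStar_blocks P' w s) by assumption.
  reflexivity.
Qed.

Variables (Pl : V) (beta : V -> V).
Hypothesis beta_injective : forall q q', inV q Pl -> inV q' Pl ->
  (eqV q q' <-> eqV (beta q) (beta q')).
Hypothesis beta_into : forall q, inV q Pl -> inV (beta q) Sigma.
Hypothesis beta_onto : forall s, inV s Sigma -> exists q, inV q Pl /\ eqV (beta q) s.

Definition places_of (J : V) : V := sepV Pl (fun q => inV (beta q) J).

Lemma beta_compat q q' : inV q Pl -> eqV q q' -> eqV (beta q) (beta q').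
Proof.
  intros Hq E. assert (Hq' : inV q' Pl) by (rewrite <- E; exact Hq).
  apply (beta_injective q q' Hq Hq'), E.
Qed.

Lemma in_places_of J q : inV q (places_of J) <-> inV q Pl /\ inV (beta q) J.
Proof.
  apply (in_sepV q Pl (fun p => inV (beta p) J)).
  intros u u' Hu E HuJ. rewrite <- (beta_compat u u' Hu E). exact HuJ.
Qed.

Lemma places_of_sub J : subV (places_of J) Pl.
Proof. intros q Hq. apply in_places_of in Hq. tauto. Qed.

Lemma in_places_of_block J q e : subV J Sigma -> inV q Pl -> inV e (beta q) ->
  (inV q (places_of J) <-> inV e (bigcupV J)).
Proof.
  intros HJ Hq He. rewrite in_places_of, (block_in_bigcup J (beta q) e HJ (beta_into q Hq) He).
  tauto.
Qed.

Lemma places_of_injective J J' : subV J Sigma -> subV J' Sigma ->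
  eqV (places_of J) (places_of J') -> eqV J J'.
Proof.
  intros HJ HJ' E. apply (eqV_ext_within Sigma); [exact HJ | exact HJ' |].
  intros s Hs. destruct (beta_onto s Hs) as (q & Hq & Eq).
  assert (Hplace : forall K, inV (beta q) K <-> inV q (places_of K))
    by (intros K; rewrite in_places_of; tauto).
  rewrite <- Eq, !Hplace, E. reflexivity.
Qed.

Lemma img_beta_pair A u v : inV u Pl -> inV v Pl -> eqV A (pairV u v) ->
  eqV (imgV beta A) (pairV (beta u) (beta v)).
Proof.
  intros Hu Hv E. apply eqV_ext; intros w. rewrite in_img, in_pair. split.
  - intros [i Ei]. assert (Hi : inV (elts A i) (pairV u v)) by (rewrite <- E; exists i; reflexivity).
    rewrite Ei. apply in_pair in Hi as [X | X]; [left | right]; symmetry;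
      apply beta_compat; (assumption || symmetry; assumption).
  - assert (HuA : inV u A) by (rewrite E; apply pair_in_l).
    assert (HvA : inV v A) by (rewrite E; apply pair_in_r).
    intros [X | X]; [destruct HuA as [i Hi] | destruct HvA as [i Hi]]; exists i;
      rewrite X; apply beta_compat; assumption.
Qed.

Lemma beta_reflects_pair u v u' v' : inV u Pl -> inV v Pl -> inV u' Pl -> inV v' Pl ->
  eqV (pairV (beta u) (beta v)) (pairV (beta u') (beta v')) -> eqV (pairV u v) (pairV u' v').
Proof.
  intros Hu Hv Hu' Hv' E.
  assert (Hreflect : forall p p1 p2, inV p Pl -> inV p1 Pl -> inV p2 Pl ->
            inV (beta p) (pairV (beta p1) (beta p2)) -> inV p (pairV p1 p2)).
  { intros p p1 p2 Hp Hp1 Hp2 H. apply in_pair in H. apply in_pair.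
    destruct H as [X | X]; [left | right]; eapply beta_injective; eassumption. }
  apply pair_ext; apply Hreflect; try assumption;
    [rewrite <- E | rewrite <- E | rewrite E | rewrite E]; auto using pair_in_l, pair_in_r.
Qed.

Variables (SigO PiO : V).

Lemma in_target_pair A u v q : inV u Pl -> inV v Pl -> eqV A (pairV u v) ->
  (inV q (T_Sigma Pl SigO PiO beta A) <->
   inV q Pl /\ inV (pairV (beta u) (beta v)) PiO /\ inV (beta q) SigO /\
   exists w, inV w (beta q) /\ in_PowStar (pairV (beta u) (beta v)) w).
Proof.
  intros Hu Hv E. unfold T_Sigma. rewrite in_sepV.
  - setoid_rewrite (img_beta_pair A u v Hu Hv E). reflexivity.
  - intros p p' Hp Ep. cbv beta. setoid_rewrite <- (beta_compat p p' Hp Ep). tauto.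
Qed.

Hypothesis SigO_max : forall SigS, is_otimes_subpartition Sigma SigS -> subV SigS SigO.
Hypothesis PiO_sub : subV PiO (otimesV Sigma Sigma).
Hypothesis PiO_spec : forall t, inV t (bigcupV SigO) <-> in_bigcup_PowStar PiO t.

Lemma places_of_union Jx Jy Jz : subV Jx Sigma -> subV Jy Sigma -> subV Jz Sigma ->
  eqV (bigcupV Jx) (unionV (bigcupV Jy) (bigcupV Jz)) ->
  eqV (places_of Jx) (unionV (places_of Jy) (places_of Jz)).
Proof.
  intros HJx HJy HJz HM. apply (eqV_ext_within Pl); [apply places_of_sub | |].
  - intros q Hq. apply in_union in Hq as [Hq | Hq]; exact (places_of_sub _ q Hq).
  - intros q Hq. destruct (blocks_nonempty (beta q) (beta_into q Hq)) as [e He].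
    rewrite in_union, (in_places_of_block Jx q e), (in_places_of_block Jy q e),
      (in_places_of_block Jz q e) by assumption.
    rewrite HM, in_union. reflexivity.
Qed.

Lemma places_of_diff Jx Jy Jz : subV Jx Sigma -> subV Jy Sigma -> subV Jz Sigma ->
  eqV (bigcupV Jx) (diffV (bigcupV Jy) (bigcupV Jz)) ->
  eqV (places_of Jx) (diffV (places_of Jy) (places_of Jz)).
Proof.
  intros HJx HJy HJz HM. apply (eqV_ext_within Pl); [apply places_of_sub | |].
  - intros q Hq. apply in_diff in Hq as [Hq _]. exact (places_of_sub _ q Hq).
  - intros q Hq. destruct (blocks_nonempty (beta q) (beta_into q Hq)) as [e He].
    rewrite in_diff, (in_places_of_block Jx q e), (in_places_of_block Jy q e),
      (in_places_of_block Jz q e) by assumption.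
    rewrite HM, in_diff. reflexivity.
Qed.

Lemma places_of_neq Jx Jy : subV Jx Sigma -> subV Jy Sigma ->
  ~ eqV (bigcupV Jx) (bigcupV Jy) -> ~ eqV (places_of Jx) (places_of Jy).
Proof. intros HJx HJy N E. apply N. rewrite (places_of_injective Jx Jy HJx HJy E). reflexivity. Qed.

Section OtimesLiteral.

Variables Jx Jy Jz : V.
Hypotheses (HJx : subV Jx Sigma) (HJy : subV Jy Sigma) (HJz : subV Jz Sigma).
Hypothesis HM : eqV (bigcupV Jx) (otimesV (bigcupV Jy) (bigcupV Jz)).

Lemma in_bigcup_otimes w : inV w (bigcupV Jx) <->
  exists s t, inV s Jy /\ inV t Jz /\ in_PowStar (pairV s t) w.
Proof.
  rewrite HM, in_otimes. split.
  - intros (a & b & Ha & Hb & E). apply in_bigcup in Ha as (s & Hs & Has).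
    apply in_bigcup in Hb as (t & Ht & Hbt).
    exists s, t. split; [exact Hs | split; [exact Ht |]].
    rewrite E. apply PowStar_pair_intro; assumption.
  - intros (s & t & Hs & Ht & HP). apply PowStar_pair_elim in HP as (a & b & Ha & Hb & E).
    exists a, b. split; [| split; [| exact E]]; apply in_bigcup; [exists s | exists t]; auto.
Qed.

(* So J(x) is a (x)-subpartition, witnessed by J(y) (x) J(z), and lies in Sigma_(x). *)
Lemma otimes_blocks_in_SigO : subV Jx SigO.
Proof.
  apply SigO_max. split; [exact HJx |]. exists (otimesV Jy Jz). split.
  - intros A HA. apply in_otimes in HA as (s & t & Hs & Ht & E). apply in_otimes.
    exists s, t. split; [apply HJy, Hs | split; [apply HJz, Ht | exact E]].
  - intros w. rewrite in_bigcup_otimes. split.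
    + intros (s & t & Hs & Ht & HP). exists (pairV s t). split; [| exact HP].
      apply in_otimes. exists s, t. split; [exact Hs | split; [exact Ht | reflexivity]].
    + intros (B & HB & HP). apply in_otimes in HB as (s & t & Hs & Ht & E). rewrite E in HP.
      exists s, t. split; [exact Hs | split; [exact Ht | exact HP]].
Qed.

Lemma block_pair_in_PiO s t : inV s Jy -> inV t Jz -> inV (pairV s t) PiO.
Proof.
  intros Hs Ht.
  destruct (blocks_nonempty s (HJy s Hs)) as [a Ha].
  destruct (blocks_nonempty t (HJz t Ht)) as [b Hb].
  assert (HP : in_PowStar (pairV s t) (pairV a b)) by (apply PowStar_pair_intro; assumption).
  assert (Hab : inV (pairV a b) (bigcupV Jx))
    by (apply in_bigcup_otimes; exists s, t; split; [exact Hs | split; [exact Ht | exact HP]]).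
  apply in_bigcup in Hab as (c & Hc & Hac).
  assert (HabO : inV (pairV a b) (bigcupV SigO))
    by (apply in_bigcup; exists c; split; [apply otimes_blocks_in_SigO, Hc | exact Hac]).
  apply PiO_spec in HabO as (B & HB & HPB).
  assert (EB : eqV B (pairV s t)).
  { apply (PowStar_determines B (pairV s t) (pairV a b)); [| | exact HPB | exact HP].
    - apply otimes_self_sub, PiO_sub, HB.
    - apply pair_sub; [apply HJy, Hs | apply HJz, Ht]. }
  rewrite <- EB. exact HB.
Qed.

Lemma target_of_blocks A u v q w : inV u Pl -> inV v Pl -> eqV A (pairV u v) ->
  inV (beta u) Jy -> inV (beta v) Jz -> inV q Pl -> inV (beta q) Jx ->
  inV w (beta q) -> in_PowStar (pairV (beta u) (beta v)) w ->
  inV q (T_Sigma Pl SigO PiO beta A).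
Proof.
  intros Hu Hv E Huy Hvz Hq Hqx Hw HP. rewrite (in_target_pair A u v q Hu Hv E).
  split; [exact Hq | split; [apply block_pair_in_PiO; assumption | split]].
  - apply otimes_blocks_in_SigO, Hqx.
  - exists w. split; assumption.
Qed.

Lemma otimes_targets_nonempty u v : inV u (places_of Jy) -> inV v (places_of Jz) ->
  exists q, inV q (T_Sigma Pl SigO PiO beta (pairV u v)).
Proof.
  intros Hu Hv. apply in_places_of in Hu as [HuP Huy]. apply in_places_of in Hv as [HvP Hvz].
  destruct (blocks_nonempty (beta u) (beta_into u HuP)) as [a Ha].
  destruct (blocks_nonempty (beta v) (beta_into v HvP)) as [b Hb].
  assert (HP : in_PowStar (pairV (beta u) (beta v)) (pairV a b))
    by (apply PowStar_pair_intro; assumption).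
  assert (Hab : inV (pairV a b) (bigcupV Jx))
    by (apply in_bigcup_otimes; exists (beta u), (beta v); split; [| split]; assumption).
  apply in_bigcup in Hab as (c & Hc & Hac).
  destruct (beta_onto c (HJx c Hc)) as (q & Hq & Eq).
  exists q. apply (target_of_blocks (pairV u v) u v q (pairV a b)); try assumption.
  - reflexivity.
  - rewrite Eq. exact Hc.
  - rewrite Eq. exact Hac.
Qed.

Lemma otimes_targets_sub u v : inV u (places_of Jy) -> inV v (places_of Jz) ->
  subV (T_Sigma Pl SigO PiO beta (pairV u v)) (places_of Jx).
Proof.
  intros Hu Hv q Hq. apply in_places_of in Hu as [HuP Huy]. apply in_places_of in Hv as [HvP Hvz].
  apply (in_target_pair _ u v q HuP HvP (reflexivity _)) in Hq as (HqP & _ & _ & w & Hw & HP).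
  apply (in_places_of_block Jx q w HJx HqP Hw), in_bigcup_otimes.
  exists (beta u), (beta v). split; [| split]; assumption.
Qed.

Lemma otimes_places_reached q : inV q (places_of Jx) ->
  exists A, inV A (otimesV (places_of Jy) (places_of Jz)) /\ inV q (T_Sigma Pl SigO PiO beta A).
Proof.
  intros Hq. apply in_places_of in Hq as [HqP Hqx].
  destruct (blocks_nonempty (beta q) (beta_into q HqP)) as [w Hw].
  assert (HwJ : inV w (bigcupV Jx)) by (apply in_bigcup; exists (beta q); split; assumption).
  apply in_bigcup_otimes in HwJ as (s & t & Hs & Ht & HP).
  destruct (beta_onto s (HJy s Hs)) as (u & HuP & Eu).
  destruct (beta_onto t (HJz t Ht)) as (v & HvP & Ev).
  rewrite <- Eu in Hs, HP. rewrite <- Ev in Ht, HP.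
  exists (pairV u v). split.
  - apply in_otimes. exists u, v.
    split; [| split; [| reflexivity]]; apply in_places_of; split; assumption.
  - apply (target_of_blocks (pairV u v) u v q w); try assumption. reflexivity.
Qed.

Lemma otimes_no_foreign_targets A q : inV A (otimesV Pl Pl) ->
  ~ inV A (otimesV (places_of Jy) (places_of Jz)) ->
  inV q (T_Sigma Pl SigO PiO beta A) -> ~ inV q (places_of Jx).
Proof.
  intros HA HnA HqT Hq. apply HnA.
  apply in_otimes in HA as (u & v & HuP & HvP & EA).
  apply (in_target_pair A u v q HuP HvP EA) in HqT as (_ & _ & _ & w & Hw & HP).
  apply in_places_of in Hq as [HqP Hqx].
  assert (HwJ : inV w (bigcupV Jx)) by (apply in_bigcup; exists (beta q); split; assumption).
  apply in_bigcup_otimes in HwJ as (s & t & Hs & Ht & HPst).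
  destruct (beta_onto s (HJy s Hs)) as (u' & Hu'P & Eu').
  destruct (beta_onto t (HJz t Ht)) as (v' & Hv'P & Ev').
  rewrite <- Eu' in Hs, HPst. rewrite <- Ev' in Ht, HPst.
  assert (Eblocks : eqV (pairV (beta u) (beta v)) (pairV (beta u') (beta v'))).
  { apply (PowStar_determines _ _ w); [| | exact HP | exact HPst];
      apply pair_sub; apply beta_into; assumption. }
  apply in_otimes. exists u', v'.
  split; [| split]; [apply in_places_of; split; assumption .. |].
  rewrite EA. apply beta_reflects_pair; assumption.
Qed.

End OtimesLiteral.

Lemma places_of_fulfilling Phi J : is_partition_assignment Phi Sigma J ->
  satisfies (M_of J) Phi ->
  fulfilling Pl (T_Sigma Pl SigO PiO beta) Phi (fun x => places_of (J x)).
Proof.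
  intros HJ Hsat. split; [intros x _; apply places_of_sub |].
  intros l Hl.
  assert (HJl : forall x, In x (vars_lit l) -> subV (J x) Sigma)
    by (intros x Hx; apply HJ, in_flat_map; exists l; split; assumption).
  specialize (Hsat l Hl). unfold sat_lit, M_of in Hsat.
  destruct l as [x y z | x y z | x y z | x y]; simpl in HJl.
  - apply places_of_union; auto.
  - apply places_of_diff; auto.
  - split; [intros u v Hu Hv; split | split].
    + apply (otimes_targets_nonempty (J x) (J y) (J z)); auto.
    + apply (otimes_targets_sub (J x) (J y) (J z)); auto.
    + apply (otimes_places_reached (J x) (J y) (J z)); auto.
    + apply (otimes_no_foreign_targets (J x) (J y) (J z)); auto.
  - apply places_of_neq; auto.
Qed.

End InducedGraph.

Theorem mainTheorem8 (Phi : conjunction) (Sigma : V) (J : nat -> V)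
    (Pl : V) (beta : V -> V) (SigO PiO : V) :
  is_partition Sigma ->
  partition_satisfies_via Sigma Phi J ->
  places_nodes_disjoint Pl ->
  is_place_bijection Pl Sigma beta ->
  is_Sigma_otimes Sigma SigO ->
  is_Pi_otimes Sigma SigO PiO ->
  fulfilling Pl (T_Sigma Pl SigO PiO beta) Phi
    (fun x => sepV Pl (fun q => inV (beta q) (J x))) /\
  fulfills Pl (T_Sigma Pl SigO PiO beta) Phi.
Proof.
  intros [Hnonempty Hdisjoint] [HJ Hsat] _ (Hinj & Hinto & Honto) [_ Hmax] [HPi_sub HPi_spec].
  assert (Hful : fulfilling Pl (T_Sigma Pl SigO PiO beta) Phi (fun x => places_of Pl beta (J x)))
    by (eapply places_of_fulfilling; eassumption).
  split; [exact Hful | exists (fun x => places_of Pl beta (J x)); exact Hful].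
Qed.
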